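(* Let $p\ge1$ and let $\mathcal A=(A_n)_{n\ge0}$ be a sequence of positive invertible $p\times p$ matrices with $\sup_n\|A_n\|<\infty$ such that the matrix-valued weighted shift $W_{\mathcal A}$ on $\ell^2(\mathbb C^p)$ is quadratically hyponormal. If $A_n=A_{n+1}$ for some $n\ge1$, then $W_{\mathcal A}$ is flat, i.e. $A_k=A_1$ for every $k\ge1$.
   Context: $\ell^2(\mathbb C^p)=\{(x_n)_{n\ge0}: x_n\in\mathbb C^p,\ \sum_n\|x_n\|^2<\infty\}$; the matrix-valued weighted shift is $W_{\mathcal A}(x_0,x_1,\dots)=(0,A_0x_0,A_1x_1,\dots)$. A bounded operator $T$ is hyponormal if $T^*T-TT^*\ge0$, and quadratically hyponormal if $T+\lambda T^2$ is hyponormal for every $\lambda\in\mathbb C$. The shift is flat if $A_k=A_1$ for all $k\ge1$. *)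

From HB Require Import structures.
From mathcomp Require Import all_boot all_order all_algebra.
From mathcomp Require Import all_classical all_reals all_analysis.
From mathcomp Require Import complex.
Set Implicit Arguments. Unset Strict Implicit. Unset Printing Implicit Defensive.
Import Order.TTheory GRing.Theory Num.Theory.
Local Open Scope ring_scope.

Section Defs.
Variables (R : realType) (p : nat).
Local Notation C := (R[i]).

Definition adjmx m n (M : 'M[C]_(m, n)) : 'M[C]_(n, m) := (map_mx Num.conj M)^T.

Definition vnorm2 (v : 'cV[C]_p) : R :=
  \sum_(i < p) ((complex.Re (v i 0)) ^+ 2 + (complex.Im (v i 0)) ^+ 2).

Definition vseq := nat -> 'cV[C]_p.

Definition l2norm2 (x : vseq) : \bar R :=
  (\sum_(0 <= n <oo) ((vnorm2 (x n))%:E))%E.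

Definition in_l2 (x : vseq) : Prop := (l2norm2 x < +oo)%E.

Definition positive_mx (M : 'M[C]_p) : Prop :=
  adjmx M = M /\ forall v : 'cV[C]_p, 0 <= (adjmx v *m M *m v) 0 0.

Definition positive_invertible (M : 'M[C]_p) : Prop :=
  positive_mx M /\ M \in unitmx.

(* sup_n ||A_n|| < oo  (operator norms) *)
Definition bounded_weights (A : nat -> 'M[C]_p) : Prop :=
  exists M : R, forall n (v : 'cV[C]_p), vnorm2 (A n *m v) <= M ^+ 2 * vnorm2 v.

Definition wshift (A : nat -> 'M[C]_p) (x : vseq) : vseq :=
  fun n => if n is k.+1 then A k *m x k else 0.

Definition wshift_adj (A : nat -> 'M[C]_p) (x : vseq) : vseq :=
  fun n => adjmx (A n) *m x n.+1.

(* T (with adjoint Tadj) is hyponormal: <(T^* T - T T^* ) x, x> >= 0 on l^2,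
   i.e. ||T^* x||^2 <= ||T x||^2 for all x in l^2 *)
Definition hyponormal (T Tadj : vseq -> vseq) : Prop :=
  forall x : vseq, in_l2 x -> (l2norm2 (Tadj x) <= l2norm2 (T x))%E.

Definition quad_op (T : vseq -> vseq) (lam : C) (x : vseq) : vseq :=
  fun n => T x n + lam *: T (T x) n.

Definition quadratically_hyponormal (A : nat -> 'M[C]_p) : Prop :=
  forall lam : C,
    hyponormal (quad_op (wshift A) lam) (quad_op (wshift_adj A) (Num.conj lam)).

Definition flat (A : nat -> 'M[C]_p) : Prop :=
  forall k, (1 <= k)%N -> A k = A 1%N.

End Defs.

(* Let B := A_(m+1) = A_(m+2), and test the hyponormality of T := W + s W^2 (s > 0 real) on
   the sequence supported on [m, m+4] with entries
     s^2 A_m^-1 B^3 xi,  -s B xi,  xi,  -s B xi,  s^2 A_(m+3) B xi.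
   It is chosen so that (T x)_(m+4) = (T x)_(m+5) = 0 and all terms of order s^2 in
   ||T x||^2 - ||T^* x||^2 cancel; what remains is
     s^6 D - s^4 (||A_(m+3)^2 B xi - B^3 xi||^2 + ||A_(m-1) (A_m^-1 B^3 xi - A_m B xi)||^2)
   (the last term only if m > 0).  Letting s -> 0 kills both defects, hence
   A_(m+3)^2 B = B^3 and B^3 = A_m^2 B, i.e. A_(m+3)^2 = B^2 = A_m^2, and uniqueness of
   positive square roots gives A_(m+3) = B = A_m.  So two equal consecutive weights
   propagate in both directions. *)

From HB Require Import structures.
From mathcomp Require Import all_boot all_order all_algebra.
From mathcomp Require Import all_classical all_reals all_analysis.
From mathcomp Require Import complex.
From mathcomp Require Import ring lra zify.
Set Implicit Arguments. Unset Strict Implicit. Unset Printing Implicit Defensive.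
Import Order.TTheory GRing.Theory Num.Theory.
Local Open Scope ring_scope.
Local Open Scope complex_scope.

Section Adjoint.
Variable R : realType.
Local Notation C := R[i].

Lemma conj_real (s : R) : Num.conj s%:C = s%:C.
Proof. exact: conjc_real. Qed.

Lemma adjmx_mul m n k (M : 'M[C]_(m, n)) (N : 'M[C]_(n, k)) :
  adjmx (M *m N) = adjmx N *m adjmx M.
Proof. by rewrite /adjmx map_mxM trmx_mul. Qed.

Lemma adjmxK m n (M : 'M[C]_(m, n)) : adjmx (adjmx M) = M.
Proof. by apply/matrixP => i j; rewrite /adjmx !mxE conjCK. Qed.

Lemma adjmxD m n (M N : 'M[C]_(m, n)) : adjmx (M + N) = adjmx M + adjmx N.
Proof. by apply/matrixP => i j; rewrite /adjmx !mxE rmorphD. Qed.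

Lemma adjmxB m n (M N : 'M[C]_(m, n)) : adjmx (M - N) = adjmx M - adjmx N.
Proof. by apply/matrixP => i j; rewrite /adjmx !mxE rmorphB. Qed.

Lemma adjmxZ m n (c : C) (M : 'M[C]_(m, n)) : adjmx (c *: M) = Num.conj c *: adjmx M.
Proof. by apply/matrixP => i j; rewrite /adjmx !mxE rmorphM. Qed.

End Adjoint.

Section InnerProduct.
Variables (R : realType) (n : nat).
Local Notation C := R[i].
Local Notation V := 'cV[C]_n.

Definition ipr (u v : V) : R := complex.Re ((adjmx u *m v) 0 0).

Lemma ipr_adjmx (M : 'M[C]_n) (u v : V) : ipr (M *m u) v = ipr u (adjmx M *m v).
Proof. by rewrite /ipr adjmx_mul mulmxA. Qed.

Lemma iprC (u v : V) : ipr u v = ipr v u.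
Proof.
rewrite /ipr; have -> : adjmx u *m v = adjmx (adjmx v *m u) by rewrite adjmx_mul adjmxK.
have adj11 (X : 'M[C]_1) : adjmx X 0 0 = Num.conj (X 0 0) by rewrite /adjmx !mxE.
by rewrite adj11; case: ((adjmx v *m u) 0 0).
Qed.

Lemma iprDl (u v w : V) : ipr (u + v) w = ipr u w + ipr v w.
Proof. by rewrite /ipr adjmxD mulmxDl mxE raddfD. Qed.

Lemma iprDr (u v w : V) : ipr u (v + w) = ipr u v + ipr u w.
Proof. by rewrite iprC iprDl !(iprC u). Qed.

Lemma iprZl (s : R) (u v : V) : ipr (s%:C *: u) v = s * ipr u v.
Proof.
rewrite /ipr adjmxZ conj_real -scalemxAl mxE.
by case: ((adjmx u *m v) 0 0) => a b /=; rewrite mul0r subr0.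
Qed.

Lemma iprZr (s : R) (u v : V) : ipr u (s%:C *: v) = s * ipr u v.
Proof. by rewrite iprC iprZl iprC. Qed.

Lemma vnorm2E (u : V) : vnorm2 u = ipr u u.
Proof.
rewrite /vnorm2 /ipr mxE raddf_sum; apply: eq_bigr => i _.
by rewrite /adjmx !mxE; case: (u i 0) => a b /=; rewrite mulNr opprK -!expr2.
Qed.

Lemma vnorm2_ge0 (u : V) : 0 <= vnorm2 u.
Proof. by apply: sumr_ge0 => i _; rewrite addr_ge0 ?sqr_ge0. Qed.

Lemma vnorm2_0 : vnorm2 (0 : V) = 0.
Proof. by rewrite vnorm2E /ipr mulmx0 mxE. Qed.

Lemma vnorm2_eq0 (u : V) : vnorm2 u = 0 -> u = 0.
Proof.
move=> /eqP; rewrite /vnorm2 psumr_eq0 => [/allP u0|i _]; last by rewrite addr_ge0 ?sqr_ge0.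
apply/matrixP => i j; rewrite (ord1 j) mxE.
move: (u0 i (mem_index_enum i)); rewrite paddr_eq0 ?sqr_ge0 // !sqrf_eq0.
by case: (u i 0) => a b /andP[/eqP /= -> /eqP /= ->].
Qed.

Lemma vnorm2D (u v : V) : vnorm2 (u + v) = vnorm2 u + vnorm2 v + 2 * ipr u v.
Proof. by rewrite !vnorm2E iprDl !iprDr (iprC v u); ring. Qed.

Lemma vnorm2Z (s : R) (u : V) : vnorm2 (s%:C *: u) = s ^+ 2 * vnorm2 u.
Proof. by rewrite !vnorm2E iprZl iprZr mulrA. Qed.

Lemma vnorm2B (u v : V) : vnorm2 (u - v) = vnorm2 u + vnorm2 v - 2 * ipr u v.
Proof.
have -> : - v = (-1)%:C *: v by rewrite rmorphN1 scaleN1r.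
by rewrite vnorm2D vnorm2Z iprZr; ring.
Qed.

Lemma quad_test_norms (s low : R) (u1 u2 u3 u4 w Bw z : V) :
  ipr u2 u4 = vnorm2 u3 -> ipr u2 Bw = ipr u3 w ->
  low + vnorm2 (u1 + (- s ^+ 2)%:C *: u3) + vnorm2 ((- s)%:C *: u2 + (s ^+ 3)%:C *: Bw)
    + vnorm2 ((s ^+ 2)%:C *: w)
  <= vnorm2 ((s ^+ 2)%:C *: u3) + vnorm2 ((- s)%:C *: u2 + (s ^+ 3)%:C *: u4)
    + vnorm2 (u1 + (- s ^+ 2)%:C *: u3) + vnorm2 ((s ^+ 3)%:C *: z) ->
  low + s ^+ 4 * vnorm2 (w - u3) <= s ^+ 6 * (vnorm2 u4 + vnorm2 z - vnorm2 Bw).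
Proof.
move=> u2u4 u2Bw; rewrite vnorm2B !vnorm2D !vnorm2Z !iprZl !iprZr u2u4 u2Bw (iprC w u3).
have le_of_subr (P Q X Y : R) : Y - X = Q - P -> P <= Q -> X <= Y.
  by move=> e; rewrite -subr_ge0 -(subr_ge0 X) e.
by apply: le_of_subr; ring.
Qed.

End InnerProduct.

Section PositiveMatrices.
Variables (R : realType) (n : nat).
Local Notation C := R[i].
Local Notation V := 'cV[C]_n.

Lemma eq_mx_of_mulmx_cV (M N : 'M[C]_n) : (forall v : V, M *m v = N *m v) -> M = N.
Proof.
move=> MN; apply/matrixP => i j.
by have := congr1 (fun w : V => w i 0) (MN (delta_mx j 0)); rewrite -!colE !mxE.
Qed.

Lemma positive_mx_ipr_ge0 (M : 'M[C]_n) (v : V) : positive_mx M -> 0 <= ipr v (M *m v).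
Proof. by case=> _ /(_ v); rewrite -mulmxA lecE => /andP[]. Qed.

Lemma positive_mx_ipr_eq0 (M : 'M[C]_n) (v : V) :
  positive_mx M -> ipr v (M *m v) = 0 -> M *m v = 0.
Proof.
move=> Mpos v0; apply: vnorm2_eq0; rewrite vnorm2E.
(* positivity of the form along v + t w forces ipr w (M v) = 0 *)
suff orth w : ipr w (M *m v) = 0 by exact: orth.
set c := ipr w (M *m v); set b := ipr w (M *m w).
have b_ge0 : 0 <= b := positive_mx_ipr_ge0 w Mpos.
set t := - c / (b + 1).
have := positive_mx_ipr_ge0 (v + t%:C *: w) Mpos.
have vMw : ipr v (M *m w) = c by rewrite /c -{2}Mpos.1 -ipr_adjmx iprC.
rewrite mulmxDr -scalemxAr iprDl !iprDr !iprZl !iprZr v0 vMw -/b -/c.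
have tb : t * (b + 1) = - c by rewrite /t divfK // lt0r_neq0 // ltr_wpDl.
have -> : c = - (t * (b + 1)) by rewrite tb opprK.
move=> ge0; have t0 : t = 0 by nra.
by rewrite t0 mul0r oppr0.
Qed.

Lemma Re_mxtrace_sandwich (M X : 'M[C]_n) : adjmx M = M ->
  complex.Re (\tr (M *m X *m M)) = \sum_j ipr (col j M) (X *m col j M).
Proof.
move=> Mherm; rewrite /mxtrace raddf_sum; apply: eq_bigr => j _; congr complex.Re.
have -> : adjmx (col j M) = row j M by rewrite -{2}Mherm; apply/matrixP => i k; rewrite !mxE.
by rewrite !colE mulmxA -row_mul mulmxA -row_mul -colE !mxE.
Qed.

Lemma positive_mx_sqr_inj (A B : 'M[C]_n) :
  positive_mx A -> positive_mx B -> A *m A = B *m B -> A = B.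
Proof.
(* M := A - B satisfies A M + M B = 0, so tr (M A M) + tr (M B M) = 0 with both terms >= 0 *)
move=> Apos Bpos AB; set M := A - B.
have Mherm : adjmx M = M by rewrite /M adjmxB Apos.1 Bpos.1.
have anticomm : A *m M + M *m B = 0 by rewrite mulmxBr mulmxBl AB addrA subrK subrr.
have tr0 : \tr (M *m A *m M) + \tr (M *m B *m M) = 0.
  by rewrite -mulmxA (mxtrace_mulC (M *m B)) -mxtraceD -mulmxDr anticomm mulmx0 mxtrace0.
have isotropic j : ipr (col j M) (A *m col j M) = 0 /\ ipr (col j M) (B *m col j M) = 0.
  move/(congr1 (@complex.Re R)): tr0; rewrite raddfD /= !Re_mxtrace_sandwich // -big_split /=.
  move/eqP; rewrite psumr_eq0 => [/allP/(_ j (mem_index_enum j))|i _]; last first.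
    by rewrite addr_ge0 // positive_mx_ipr_ge0.
  by rewrite paddr_eq0 ?positive_mx_ipr_ge0 // => /andP[/eqP ? /eqP ?].
have MM0 : M *m M = 0.
  apply/matrixP => i j.
  have [/(positive_mx_ipr_eq0 Apos) Aj /(positive_mx_ipr_eq0 Bpos) Bj] := isotropic j.
  have MMj : M *m col j M = 0 by rewrite mulmxBl Aj Bj subrr.
  by have := congr1 (fun v : V => v i 0) MMj; rewrite colE mulmxA -colE !mxE.
apply/eqP; rewrite -subr_eq0 -/M; apply/eqP/eq_mx_of_mulmx_cV => v.
rewrite mul0mx; apply: vnorm2_eq0; rewrite vnorm2E ipr_adjmx Mherm mulmxA MM0 mul0mx.
by rewrite /ipr mulmx0 mxE.
Qed.

End PositiveMatrices.

Section WeightedShift.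
Variables (R : realType) (p : nat).
Local Notation C := R[i].

Lemma l2norm2_ge_sum (x : vseq R p) N :
  ((\sum_(k < N) vnorm2 (x k))%:E <= l2norm2 x)%E.
Proof.
have -> : (\sum_(k < N) vnorm2 (x k))%:E = (\sum_(0 <= k < N) (vnorm2 (x k))%:E)%E.
  by rewrite sumEFin big_mkord.
by apply: nneseries_lim_ge => k _ _; rewrite lee_fin vnorm2_ge0.
Qed.

Lemma l2norm2_finite_support (x : vseq R p) N : (forall k, (N <= k)%N -> x k = 0) ->
  l2norm2 x = (\sum_(k < N) vnorm2 (x k))%:E.
Proof.
move=> xN; rewrite /l2norm2 (nneseries_split 0 N) => [|k _]; last by rewrite lee_fin vnorm2_ge0.
rewrite add0n eseries0 ?adde0 => [|k kN _]; last by rewrite xN // vnorm2_0.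
by rewrite sumEFin big_mkord.
Qed.

Lemma quad_wshift0 (A : nat -> 'M[C]_p) lam x : quad_op (wshift A) lam x 0 = 0.
Proof. by rewrite /quad_op /= scaler0 addr0. Qed.

Lemma quad_wshiftS (A : nat -> 'M[C]_p) lam x k :
  quad_op (wshift A) lam x k.+1 = A k *m (x k + lam *: wshift A x k).
Proof. by rewrite /quad_op /= mulmxDr scalemxAr. Qed.

Lemma quad_wshift_adjE (A : nat -> 'M[C]_p) lam x k :
  quad_op (wshift_adj A) lam x k = adjmx (A k) *m (x k.+1 + lam *: (adjmx (A k.+1) *m x k.+2)).
Proof. by rewrite /quad_op /wshift_adj mulmxDr scalemxAr. Qed.

End WeightedShift.

Lemma le0_of_pow4_le_pow6 (R : realFieldType) (K D : R) :
  (forall s, 0 < s -> s ^+ 4 * K <= s ^+ 6 * D) -> K <= 0.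
Proof.
move=> KD; apply/ler_addgt0Pr => z z0; rewrite add0r.
have D_le : D <= `|D| := ler_norm D.
have D_ge0 : 0 <= `|D| := normr_ge0 D.
(* s < 1, hence s ^+ 2 * D <= s * `|D| < z *)
set s := z / (z + `|D| + 1).
have den_gt0 : 0 < z + `|D| + 1 by lra.
have sz : s * (z + `|D| + 1) = z by rewrite divfK // gt_eqF.
have s_gt0 : 0 < s by rewrite divr_gt0.
have := KD s s_gt0; rewrite -(@subnKC 4 6) // exprD -mulrA ler_pM2l ?exprn_gt0 //.
by nra.
Qed.

Section FlatPropagation.
Variables (R : realType) (p : nat) (A : nat -> 'M[R[i]]_p).
Local Notation C := R[i].
Local Notation V := 'cV[C]_p.
Hypothesis Apos : forall k, positive_mx (A k).
Let Aherm k : adjmx (A k) = A k := (Apos k).1.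
Hypothesis Aunit : forall k, A k \in unitmx.
Hypothesis hypo : forall s : R,
  hyponormal (quad_op (wshift A) s%:C) (quad_op (wshift_adj A) s%:C).

Section TestSequence.
Variables (m : nat) (s : R) (xi : V).
Hypothesis Aflat : A m.+1 = A m.+2.

Local Notation B := (A m.+1).
Let e1 := B *m xi.
Let e2 := B *m e1.
Let e3 := B *m e2.
Let e4 := B *m e3.
Let q := A m.+3 *m (A m.+3 *m e1).

Let entries : seq V := [:: (s ^+ 2)%:C *: (invmx (A m) *m e3); (- s)%:C *: e1; xi;
  (- s)%:C *: e1; (s ^+ 2)%:C *: (A m.+3 *m e1)].

Definition test_seq : vseq R p := fun k => if (k < m)%N then 0 else nth 0 entries (k - m).

Local Notation x := test_seq.
Local Notation Tx := (quad_op (wshift A) s%:C test_seq).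
Local Notation Ts := (quad_op (wshift_adj A) s%:C test_seq).

Lemma test_seq_lt k : (k < m)%N -> x k = 0.
Proof. by rewrite /x => ->. Qed.

Lemma test_seq_addn i : x (m + i) = nth 0 entries i.
Proof. by rewrite /x ltnNge leq_addr addKn. Qed.

Lemma test_seq_ge k : (m + 5 <= k)%N -> x k = 0.
Proof.
move=> k_ge; rewrite -(subnKC (leq_trans (leq_addr 5 m) k_ge)) test_seq_addn nth_default //.
by rewrite /=; lia.
Qed.

Lemma test_seq_m : x m = (s ^+ 2)%:C *: (invmx (A m) *m e3).
Proof. by rewrite /x ltnn subnn. Qed.

Lemma test_seq_m1 : x m.+1 = (- s)%:C *: e1.
Proof. by rewrite -[m.+1]addn1 test_seq_addn. Qed.

Lemma test_seq_m2 : x m.+2 = xi.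
Proof. by rewrite -[m.+2]addn2 test_seq_addn. Qed.

Lemma test_seq_m3 : x m.+3 = (- s)%:C *: e1.
Proof. by rewrite -[m.+3]addn3 test_seq_addn. Qed.

Lemma test_seq_m4 : x m.+4 = (s ^+ 2)%:C *: (A m.+3 *m e1).
Proof. by rewrite -[m.+4]addn4 test_seq_addn. Qed.

Lemma wshift_test_seq_m : wshift A x m = 0.
Proof. by rewrite /wshift; case E: m => [//|j]; rewrite test_seq_lt ?mulmx0 // E. Qed.

Lemma quad_test1 : Tx m.+1 = (s ^+ 2)%:C *: e3.
Proof.
by rewrite quad_wshiftS wshift_test_seq_m scaler0 addr0 test_seq_m -scalemxAr mulKVmx.
Qed.

Lemma quad_test2 : Tx m.+2 = (- s)%:C *: e2 + (s ^+ 3)%:C *: e4.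
Proof.
rewrite quad_wshiftS /= test_seq_m1 test_seq_m -!scalemxAr mulKVmx // scalerA -rmorphM -exprS.
by rewrite mulmxDr -!scalemxAr.
Qed.

Lemma quad_test3 : Tx m.+3 = e1 + (- s ^+ 2)%:C *: e3.
Proof.
rewrite quad_wshiftS /= test_seq_m2 test_seq_m1 -Aflat -!scalemxAr scalerA -rmorphM mulrN -expr2.
by rewrite mulmxDr -!scalemxAr.
Qed.

Lemma quad_test4 : Tx m.+4 = 0.
Proof.
by rewrite quad_wshiftS /= test_seq_m3 test_seq_m2 -Aflat -/e1 rmorphN scaleNr addNr mulmx0.
Qed.

Lemma quad_test5 : Tx m.+4.+1 = 0.
Proof.
rewrite quad_wshiftS /= test_seq_m4 test_seq_m3 -!scalemxAr scalerA -rmorphM mulrN -expr2.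
by rewrite rmorphN scaleNr subrr mulmx0.
Qed.

Lemma quad_test6 :
  Tx m.+4.+2 = (s ^+ 3)%:C *: (A m.+4.+1 *m (A m.+4 *m (A m.+3 *m e1))).
Proof.
rewrite quad_wshiftS /= test_seq_ge; last by lia.
by rewrite add0r test_seq_m4 -!scalemxAr scalerA -rmorphM -exprS.
Qed.

Lemma quad_test_le k : (k <= m)%N -> Tx k = 0.
Proof.
case: k => [_|k k_lt]; first exact: quad_wshift0.
rewrite quad_wshiftS test_seq_lt // /wshift.
by case: k k_lt => [|j] j_lt; rewrite ?test_seq_lt ?(ltnW j_lt) // ?mulmx0 scaler0 addr0 mulmx0.
Qed.

Lemma quad_test_ge k : (m.+4.+3 <= k)%N -> Tx k = 0.
Proof.
case: k => [//|k k_ge]; rewrite quad_wshiftS /wshift test_seq_ge; last by lia.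
by case: k k_ge => [//|j] j_ge; rewrite test_seq_ge ?mulmx0 ?scaler0 ?addr0 ?mulmx0 //; lia.
Qed.

Lemma quad_adj_test1 : Ts m.+1 = e1 + (- s ^+ 2)%:C *: e3.
Proof.
rewrite quad_wshift_adjE !Aherm test_seq_m2 test_seq_m3 -Aflat.
by rewrite -!scalemxAr scalerA -rmorphM mulrN -expr2 mulmxDr -!scalemxAr.
Qed.

Lemma quad_adj_test2 : Ts m.+2 = (- s)%:C *: e2 + (s ^+ 3)%:C *: (B *m q).
Proof.
rewrite quad_wshift_adjE !Aherm test_seq_m3 test_seq_m4 -Aflat.
by rewrite -!scalemxAr scalerA -rmorphM -exprS mulmxDr -!scalemxAr.
Qed.

Lemma quad_adj_test3 : Ts m.+3 = (s ^+ 2)%:C *: q.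
Proof.
rewrite quad_wshift_adjE !Aherm test_seq_m4 test_seq_ge; last by lia.
by rewrite mulmx0 scaler0 addr0 -scalemxAr.
Qed.

Lemma quad_adj_test_pred m' : m = m'.+1 ->
  Ts m' = (s ^+ 2)%:C *: (A m' *m (invmx (A m) *m e3 - A m *m e1)).
Proof.
move=> mE; rewrite quad_wshift_adjE !Aherm -mE test_seq_m test_seq_m1.
rewrite -!scalemxAr scalerA -rmorphM mulrN -expr2 rmorphN scaleNr.
by rewrite -scalerBr scalemxAr.
Qed.

Lemma quad_test_ineq :
  \sum_(k < m) vnorm2 (Ts k) + s ^+ 4 * vnorm2 (q - e3) <=
  s ^+ 6 * (vnorm2 e4 + vnorm2 (A m.+4.+1 *m (A m.+4 *m (A m.+3 *m e1))) - vnorm2 (B *m q)).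
Proof.
have x_l2 : in_l2 x.
  by rewrite /in_l2 (@l2norm2_finite_support _ _ _ (m + 5)) ?ltry // => k /test_seq_ge.
have := le_trans (l2norm2_ge_sum Ts m.+4) (hypo s x_l2).
rewrite (@l2norm2_finite_support _ _ _ m.+4.+3) => [|k]; last exact: quad_test_ge.
have Tx_sum : \sum_(k < m.+4.+3) vnorm2 (Tx k) =
    vnorm2 (Tx m.+1) + vnorm2 (Tx m.+2) + vnorm2 (Tx m.+3) + vnorm2 (Tx m.+4.+2).
  move: quad_test_le quad_test4 quad_test5; generalize Tx => T T_le T4 T5.
  rewrite !big_ord_recr /= big1 => [|k _]; last by rewrite T_le ?vnorm2_0 // ltnW.
  by rewrite T_le // T4 T5 !vnorm2_0 !add0r !addr0.
have Ts_low : \sum_(k < m) vnorm2 (Ts k) + vnorm2 (Ts m.+1) + vnorm2 (Ts m.+2) + vnorm2 (Ts m.+3)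
    <= \sum_(k < m.+4) vnorm2 (Ts k).
  by rewrite !big_ord_recr /= !lerD2r lerDl vnorm2_ge0.
rewrite lee_fin Tx_sum => /(le_trans Ts_low).
rewrite quad_test1 quad_test2 quad_test3 quad_test6 quad_adj_test1 quad_adj_test2 quad_adj_test3.
apply: quad_test_norms; first by rewrite vnorm2E /e4 -{1}Aherm -ipr_adjmx.
by rewrite -{1}Aherm -ipr_adjmx.
Qed.

End TestSequence.

Lemma flat_next m : A m.+1 = A m.+2 -> A m.+2 = A m.+3.
Proof.
move=> Aflat; set B := A m.+1; set Q := A m.+3.
have cube (xi : V) : Q *m (Q *m (B *m xi)) = B *m (B *m (B *m xi)).
  apply/subr0_eq/vnorm2_eq0/le_anti; rewrite vnorm2_ge0 andbT.
  apply: le0_of_pow4_le_pow6 => s s_gt0.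
  apply: le_trans (quad_test_ineq s xi Aflat); rewrite lerDr.
  by apply: sumr_ge0 => k _; exact: vnorm2_ge0.
have sqr : Q *m Q = B *m B.
  apply: (can_inj (mulmxK (Aunit m.+1))); apply: eq_mx_of_mulmx_cV => xi.
  by rewrite -!mulmxA cube.
by rewrite -Aflat; apply/esym; exact: positive_mx_sqr_inj (Apos _) (Apos _) sqr.
Qed.

Lemma flat_prev m : A m.+2 = A m.+3 -> A m.+1 = A m.+2.
Proof.
move=> Aflat; set L := A m.+1; set B := A m.+2.
have defects (xi : V) :
    vnorm2 (A m *m (invmx L *m (B *m (B *m (B *m xi))) - L *m (B *m xi)))
    + vnorm2 (A m.+4 *m (A m.+4 *m (B *m xi)) - B *m (B *m (B *m xi))) <= 0.
  apply: le0_of_pow4_le_pow6 => s s_gt0.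
  apply: le_trans (quad_test_ineq s xi Aflat); rewrite mulrDr lerD2r big_ord_recr /=.
  rewrite (quad_adj_test_pred s xi (erefl m.+1)) vnorm2Z -exprM.
  by apply: ler_wpDl => //; apply: sumr_ge0 => k _; exact: vnorm2_ge0.
have cube (xi : V) : B *m (B *m (B *m xi)) = L *m (L *m (B *m xi)).
  have /vnorm2_eq0 : vnorm2 (A m *m (invmx L *m (B *m (B *m (B *m xi))) - L *m (B *m xi))) = 0.
    apply/le_anti; rewrite vnorm2_ge0 andbT.
    by apply: le_trans (defects xi); rewrite lerDl vnorm2_ge0.
  move/(congr1 (mulmx (invmx (A m)))); rewrite mulKmx // mulmx0 => /subr0_eq.
  by move/(congr1 (mulmx L)); rewrite (mulKVmx (Aunit m.+1)).
have sqr : L *m L = B *m B.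
  apply: (can_inj (mulmxK (Aunit m.+2))); apply: eq_mx_of_mulmx_cV => xi.
  by rewrite -!mulmxA cube.
exact: positive_mx_sqr_inj (Apos _) (Apos _) sqr.
Qed.

Lemma flat_step_iff m : A m.+1 = A m.+2 <-> A m.+2 = A m.+3.
Proof. by split; [exact: flat_next | exact: flat_prev]. Qed.

End FlatPropagation.

Lemma propagate_iffS (P : nat -> Prop) : (forall k, P k <-> P k.+1) -> forall n k, P n -> P k.
Proof.
move=> PS n k Pn; have P0 : P 0 by elim: n Pn => // n IH /(PS n).2/IH.
by elim: k => // k IH; apply/(PS k).1.
Qed.

Theorem mainTheorem7 (R : realType) (p : nat) (A : nat -> 'M[R[i]]_p) :
  (1 <= p)%N ->
  (forall n, positive_invertible (A n)) ->
  bounded_weights A ->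
  quadratically_hyponormal A ->
  forall n, (1 <= n)%N -> A n = A n.+1 ->
  flat A.
Proof.
move=> _ Apos _ quad_hypo [//|n] _ An.
have hypo (s : R) : hyponormal (quad_op (wshift A) s%:C) (quad_op (wshift_adj A) s%:C).
  by have := quad_hypo s%:C; rewrite conj_real.
have consec j : A j.+1 = A j.+2.
  exact: propagate_iffS (flat_step_iff (fun k => (Apos k).1) (fun k => (Apos k).2) hypo) n j An.
by case=> [//|k] _; elim: k => [//|k IH]; rewrite -consec.
Qed.
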